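(* Let $\mathrm{Min}=\{X\in 2^\omega: X \text{ is of minimal Turing degree}\}$ and suppose $\dim_H(\mathrm{Min})=r$. Then every maximal antichain of Turing degrees has Hausdorff dimension at least $r$.
   Context: $X$ is of minimal degree if $X$ is non-computable and every $Y\le_T X$ is either computable or satisfies $X\le_T Y$. A class $\mathcal B\subseteq 2^\omega$ is an antichain of Turing degrees if (a) $\mathcal B$ contains no computable set; (b) $X\in\mathcal B$ and $Y\equiv_T X$ imply $Y\in\mathcal B$; (c) for all $X,Y\in\mathcal B$ with $X\not\equiv_T Y$, $X\not<_T Y$ and $Y\not<_T X$; it is maximal if for every (non-computable) $W\notin\mathcal B$ the class $\mathcal B\cup\{X:X\equiv_T W\}$ is no longer an antichain. $\dim_H$ is the classical Hausdorff dimension on Cantor space. *)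

From Stdlib Require Import Reals List Arith Lra.
Import ListNotations.
Open Scope R_scope.

Definition Cantor := nat -> bool.

(** * Oracle computation: register (Minsky) machines with an oracle query
    instruction.  By the standard equivalence, these compute exactly the
    functions partial recursive relative to the oracle. *)
Inductive instr : Type :=
| INC (r : nat)
| DECJZ (r j : nat)
| ORC (r : nat).

Definition prog := list instr.
Definition regs := nat -> nat.

Definition upd (R : regs) (r v : nat) : regs :=
  fun k => if Nat.eqb k r then v else R k.

Definition exec (X : Cantor) (i : instr) (pc : nat) (R : regs) : nat * regs :=
  match i with
  | INC r => (S pc, upd R r (S (R r)))
  | DECJZ r j => match R r with
                 | O => (j, R)
                 | S m => (S pc, upd R r m)
                 end
  | ORC r => (S pc, upd R r (if X (R r) then 1%nat else 0%nat))
  end.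

(** [run X p fuel pc R] = [Some R'] iff the machine halts (pc leaves the
    program) within [fuel] steps with final registers [R']. *)
Fixpoint run (X : Cantor) (p : prog) (fuel : nat) (pc : nat) (R : regs)
  : option regs :=
  match nth_error p pc with
  | None => Some R
  | Some i => match fuel with
              | O => None
              | S f => let '(pc', R') := exec X i pc R in run X p f pc' R'
              end
  end.

Definition init (n : nat) : regs := fun k => if Nat.eqb k 0 then n else 0%nat.

Definition computes_with (X : Cantor) (p : prog) (A : Cantor) : Prop :=
  forall n, exists fuel R, run X p fuel 0 (init n) = Some R /\
                           R 0%nat = (if A n then 1%nat else 0%nat).

Definition Treducible (A X : Cantor) : Prop := exists p, computes_with X p A.

Definition computable (A : Cantor) : Prop := Treducible A (fun _ => false).

Definition Tequiv (A B : Cantor) : Prop := Treducible A B /\ Treducible B A.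
Definition Tless (A B : Cantor) : Prop := Treducible A B /\ ~ Treducible B A.

Definition minimal_degree (X : Cantor) : Prop :=
  ~ computable X /\
  forall Y, Treducible Y X -> computable Y \/ Treducible X Y.

Definition Min : Cantor -> Prop := fun X => minimal_degree X.

(** Antichains of Turing degrees, as classes of sets. *)
Definition antichain (B : Cantor -> Prop) : Prop :=
  (forall X, B X -> ~ computable X) /\
  (forall X Y, B X -> Tequiv Y X -> B Y) /\
  (forall X Y, B X -> B Y -> ~ Tequiv X Y -> ~ Tless X Y /\ ~ Tless Y X).

Definition maximal_antichain (B : Cantor -> Prop) : Prop :=
  antichain B /\
  forall W, ~ computable W -> ~ B W ->
    ~ antichain (fun X => B X \/ Tequiv X W).

(** * Hausdorff dimension on Cantor space (standard metric
    d(X,Y) = 2^{-min{n | X n <> Y n}}; the cylinder [sigma] has diameter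
    2^{-|sigma|}). *)
Definition prefix (s : list bool) (X : Cantor) : Prop :=
  forall i, (i < length s)%nat -> nth i s false = X i.

Definition cost (s : R) (c : option (list bool)) : R :=
  match c with
  | None => 0
  | Some sg => Rpower 2 (- (s * INR (length sg)))
  end.

Definition Hnull (s : R) (A : Cantor -> Prop) : Prop :=
  forall eps, 0 < eps ->
    exists C : nat -> option (list bool),
      (forall X, A X -> exists i sg, C i = Some sg /\ prefix sg X) /\
      (forall N, sum_f_R0 (fun i => cost s (C i)) N <= eps).

Definition is_dimH (A : Cantor -> Prop) (d : R) : Prop :=
  (forall s, 0 <= s -> Hnull s A -> d <= s) /\
  (forall t, (forall s, 0 <= s -> Hnull s A -> t <= s) -> t <= d).

From Stdlib Require Import Reals List Arith Lia Lra FunctionalExtensionality Classical.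
Import ListNotations.

(* Let S be the set of triangular numbers, a set of density zero.  If X has minimal degree
   and B is a maximal antichain, then X <=_T Y for some Y in B: otherwise the degree of X
   could be added to B, since a member of B below X would be computable or equivalent to X.
   Overwriting X on S with the bits of Y gives a set Turing equivalent to Y, hence in B,
   which differs from X only on S.  So Min is contained in the class of modifications on S
   of members of B.  As S has density zero, covering all modifications of a cylinder of
   length N costs only a factor 2^(o(N)), so H^s(B) = 0 implies that this class is H^t-null
   for every t > s, whence dim_H Min <= dim_H B. *)

Local Open Scope nat_scope.

(** * Runs of register machines *)

Definition state : Type := nat * regs.

Definition step (X : Cantor) (P : prog) (s : state) : option state :=
  match nth_error P (fst s) with
  | Some i => Some (exec X i (fst s) (snd s))
  | None => None
  end.

Inductive reaches (X : Cantor) (P : prog) : state -> state -> Prop :=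
| reaches_refl s : reaches X P s s
| reaches_step s1 s2 s3 :
    step X P s1 = Some s2 -> reaches X P s2 s3 -> reaches X P s1 s3.

Lemma reaches_trans X P s1 s2 s3 :
  reaches X P s1 s2 -> reaches X P s2 s3 -> reaches X P s1 s3.
Proof. induction 1; intros; auto. eapply reaches_step; eauto. Qed.

Lemma run_of_reaches X P s s' :
  reaches X P s s' -> length P <= fst s' ->
  exists fuel, run X P fuel (fst s) (snd s) = Some (snd s').
Proof.
  induction 1 as [[pc R]|[pc R] s2 s3 Hstep _ IH]; intros Hhalt.
  - exists 0. simpl in *. now rewrite (proj2 (nth_error_None P pc) Hhalt).
  - destruct (IH Hhalt) as [fuel Hrun]. exists (S fuel).
    unfold step in Hstep; simpl in *.
    destruct (nth_error P pc) as [i|]; [|discriminate].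
    injection Hstep as <-. destruct (exec X i pc R). exact Hrun.
Qed.

Lemma reaches_of_run X P fuel : forall pc R R',
  run X P fuel pc R = Some R' ->
  exists pc', reaches X P (pc, R) (pc', R') /\ length P <= pc'.
Proof.
  induction fuel as [|fuel IH]; intros pc R R' Hrun; simpl in Hrun;
    destruct (nth_error P pc) as [i|] eqn:Hi.
  - discriminate.
  - injection Hrun as <-. exists pc. split; [constructor|now apply nth_error_None].
  - destruct (exec X i pc R) as [pc2 R2] eqn:Hexec.
    destruct (IH _ _ _ Hrun) as [pc' [Hreach Hhalt]].
    exists pc'. split; auto. eapply reaches_step; [|exact Hreach].
    unfold step; simpl. now rewrite Hi, Hexec.
  - injection Hrun as <-. exists pc. split; [constructor|now apply nth_error_None].
Qed.

Definition bit (b : bool) : nat := if b then 1 else 0.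

Lemma computes_with_reaches X P A :
  computes_with X P A <->
  forall n, exists pc R,
    reaches X P (0, init n) (pc, R) /\ length P <= pc /\ R 0 = bit (A n).
Proof.
  split; intros H n.
  - destruct (H n) as [fuel [R [Hrun HR]]].
    destruct (reaches_of_run _ _ _ _ _ _ Hrun) as [pc [Hreach Hhalt]].
    now exists pc, R.
  - destruct (H n) as [pc [R [Hreach [Hhalt HR]]]].
    destruct (run_of_reaches _ _ _ _ Hreach Hhalt) as [fuel Hrun].
    now exists fuel, R.
Qed.

Lemma upd_same R r v : upd R r v r = v.
Proof. unfold upd. now rewrite Nat.eqb_refl. Qed.

Lemma upd_other R r v k : k <> r -> upd R r v k = R k.
Proof. intros. unfold upd. destruct (Nat.eqb_spec k r); congruence. Qed.

Ltac regs_eq :=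
  apply functional_extensionality; let k := fresh "k" in intro k; unfold upd;
  repeat match goal with |- context [Nat.eqb ?a ?b] => destruct (Nat.eqb_spec a b) end;
  subst; try lia; try congruence.

Definition code_at (P : prog) (o : nat) (Q : prog) : Prop :=
  forall i, i < length Q -> nth_error P (o + i) = nth_error Q i.

Lemma code_at_whole P : code_at P 0 P.
Proof. intros i _. reflexivity. Qed.

Lemma code_at_app P o Q1 Q2 :
  code_at P o (Q1 ++ Q2) -> code_at P o Q1 /\ code_at P (o + length Q1) Q2.
Proof.
  intros H; split; intros i Hi.
  - rewrite H by (rewrite length_app; lia). now rewrite nth_error_app1.
  - replace (o + length Q1 + i) with (o + (length Q1 + i)) by lia.
    rewrite H by (rewrite length_app; lia). rewrite nth_error_app2 by lia.
    f_equal; lia.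
Qed.

Lemma code_at_offset P o o' Q : code_at P o Q -> o = o' -> code_at P o' Q.
Proof. now intros H <-. Qed.

Lemma code_at_instr P o Q i ins a :
  code_at P o Q -> nth_error Q i = Some ins -> a = o + i -> nth_error P a = Some ins.
Proof.
  intros H Hi ->. rewrite H; auto. apply nth_error_Some. congruence.
Qed.

Lemma reaches_exec X P a R ins :
  nth_error P a = Some ins -> reaches X P (a, R) (exec X ins a R).
Proof. intros E. eapply reaches_step; [|constructor]. unfold step; simpl; now rewrite E. Qed.

Lemma reaches_jump X P a z j R :
  nth_error P a = Some (DECJZ z j) -> R z = 0 -> reaches X P (a, R) (j, R).
Proof. intros E Hz. pose proof (reaches_exec X P a R _ E) as H. simpl in H. now rewrite Hz in H. Qed.

Lemma reaches_then X P s s1 t (Q : regs -> Prop) :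
  reaches X P s s1 -> (exists R', reaches X P s1 (t, R') /\ Q R') ->
  exists R', reaches X P s (t, R') /\ Q R'.
Proof. intros H [R' [H1 H2]]. exists R'. split; auto. eapply reaches_trans; eauto. Qed.

(* For [C : code_at P o Q]: execute (resp. take the jump of) instruction [i] of [Q].  The
   [_ex] variants work on goals [exists R', reaches X P s (t, R') /\ _]. *)
Ltac exec_at C i :=
  eapply reaches_trans;
  [eapply reaches_exec; eapply (code_at_instr _ _ _ i _ _ C eq_refl); lia|];
  cbn [exec].
Ltac jump_at C i :=
  eapply reaches_trans;
  [eapply reaches_jump; [eapply (code_at_instr _ _ _ i _ _ C eq_refl); lia|]|].
Ltac exec_at_ex C i :=
  eapply reaches_then;
  [eapply reaches_exec; eapply (code_at_instr _ _ _ i _ _ C eq_refl); lia|];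
  cbn [exec].
Ltac jump_at_ex C i :=
  eapply reaches_then;
  [eapply reaches_jump; [eapply (code_at_instr _ _ _ i _ _ C eq_refl); lia|]|].

(** * Programming macros *)

(* Register [z] is kept at 0 throughout, so that [DECJZ z j] is an unconditional jump. *)
Definition clear_code a r z := [DECJZ r (a+2); DECJZ z a].
Definition move_code a r s z := [DECJZ r (a+3); INC s; DECJZ z a].
Definition move2_code a r s t z := [DECJZ r (a+4); INC s; INC t; DECJZ z a].

Lemma clear_code_spec X P a r z R :
  code_at P a (clear_code a r z) -> r <> z -> R z = 0 ->
  reaches X P (a, R) (a+2, upd R r 0).
Proof.
  intros C Hrz. remember (R r) as n. revert R Heqn.
  induction n as [|n IH]; intros R Hn Hz; exec_at C 0; rewrite <- Hn.
  - replace (upd R r 0) with R by regs_eq. constructor.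
  - jump_at C 1. { rewrite upd_other; auto. }
    replace (upd R r 0) with (upd (upd R r n) r 0) by regs_eq.
    apply IH; [now rewrite upd_same|rewrite upd_other; auto].
Qed.

Lemma move_code_spec X P a r s z R :
  code_at P a (move_code a r s z) -> r <> s -> r <> z -> s <> z -> R z = 0 ->
  reaches X P (a, R) (a+3, upd (upd R s (R s + R r)) r 0).
Proof.
  intros C Hrs Hrz Hsz. remember (R r) as n. revert R Heqn.
  induction n as [|n IH]; intros R Hn Hz; exec_at C 0; rewrite <- Hn.
  - replace (upd (upd R s (R s + 0)) r 0) with R by regs_eq. constructor.
  - exec_at C 1. jump_at C 2. { rewrite !upd_other; auto. }
    set (R1 := upd (upd R r n) s (S (upd R r n s))).
    replace (upd (upd R s (R s + S n)) r 0) with (upd (upd R1 s (R1 s + n)) r 0)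
      by (unfold R1; regs_eq).
    apply IH; unfold R1.
    + rewrite upd_other by auto. now rewrite upd_same.
    + rewrite !upd_other; auto.
Qed.

Lemma move2_code_spec X P a r s t z R :
  code_at P a (move2_code a r s t z) ->
  r <> s -> r <> t -> r <> z -> s <> t -> s <> z -> t <> z -> R z = 0 ->
  reaches X P (a, R) (a+4, upd (upd (upd R s (R s + R r)) t (R t + R r)) r 0).
Proof.
  intros C Hrs Hrt Hrz Hst Hsz Htz. remember (R r) as n. revert R Heqn.
  induction n as [|n IH]; intros R Hn Hz; exec_at C 0; rewrite <- Hn.
  - replace (upd (upd (upd R s (R s + 0)) t (R t + 0)) r 0) with R by regs_eq.
    constructor.
  - exec_at C 1. exec_at C 2. jump_at C 3. { rewrite !upd_other; auto. }
    set (R1 := upd (upd (upd R r n) s (S (upd R r n s))) t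
                   (S (upd (upd R r n) s (S (upd R r n s)) t))).
    replace (upd (upd (upd R s (R s + S n)) t (R t + S n)) r 0)
      with (upd (upd (upd R1 s (R1 s + n)) t (R1 t + n)) r 0) by (unfold R1; regs_eq).
    apply IH; unfold R1.
    + rewrite !upd_other by auto. now rewrite upd_same.
    + rewrite !upd_other; auto.
Qed.

Definition shifted (b m : nat) (R Rq : regs) : Prop := forall i, i < m -> R (b+i) = Rq i.

Definition unchanged_outside (b m : nat) (R R' : regs) : Prop :=
  forall k, (k < b \/ b + m <= k) -> R' k = R k.

Fixpoint clear_block a b m z : prog :=
  match m with
  | 0 => []
  | S m' => clear_code a b z ++ clear_block (a+2) (S b) m' z
  end.

Lemma clear_block_length a b m z : length (clear_block a b m z) = 2*m.
Proof. revert a b; induction m; intros; simpl; auto. rewrite IHm. lia. Qed.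

Lemma clear_block_spec X P m : forall a b z R,
  code_at P a (clear_block a b m z) -> (z < b \/ b + m <= z) -> R z = 0 ->
  exists R', reaches X P (a, R) (a + 2*m, R') /\
    (forall i, i < m -> R' (b+i) = 0) /\ unchanged_outside b m R R'.
Proof.
  induction m as [|m IH]; intros a b z R C Hz H0.
  - exists R. rewrite Nat.add_0_r. split; [constructor|]. split; [intros; lia|now intros k _].
  - apply code_at_app in C as [C1 C2]. simpl in C2.
    destruct (IH (a+2) (S b) z (upd R b 0) C2) as [R' [Hreach [Hzero Hframe]]];
      [lia|rewrite upd_other; auto; lia|].
    exists R'. split; [|split].
    + eapply reaches_trans; [apply (clear_code_spec X P a b z R C1); auto; lia|].
      replace (a + 2 * S m) with (a + 2 + 2*m) by lia. exact Hreach.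
    + intros [|i] Hi.
      * rewrite Nat.add_0_r, Hframe by lia. apply upd_same.
      * replace (b + S i) with (S b + i) by lia. apply Hzero. lia.
    + intros k Hk. rewrite Hframe by lia. apply upd_other; lia.
Qed.

Definition ireg (ins : instr) : nat := match ins with INC r | DECJZ r _ | ORC r => r end.

Definition regs_below (m : nat) (q : prog) : Prop := forall ins, In ins q -> ireg ins < m.

Definition max_reg (q : prog) : nat := fold_right (fun ins m => Nat.max (ireg ins) m) 0 q.

Lemma regs_below_max_reg q : regs_below (S (max_reg q)) q.
Proof.
  induction q as [|ins' q IH]; intros ins H; simpl in *; [contradiction|].
  destruct H as [->|H]; [lia|]. specialize (IH _ H). lia.
Qed.

(* Jumps past the end of [q] are redirected to the end of the relocated copy. *)
Definition reloc_instr (o b h : nat) (ins : instr) : instr :=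
  match ins with
  | INC r => INC (b+r)
  | DECJZ r j => DECJZ (b+r) (o + Nat.min j h)
  | ORC r => ORC (b+r)
  end.

Definition reloc (o b : nat) (q : prog) : prog := map (reloc_instr o b (length q)) q.

Lemma shifted_upd b m R Rq r v :
  shifted b m R Rq -> r < m -> shifted b m (upd R (b+r) v) (upd Rq r v).
Proof.
  intros Hs Hr i Hi. unfold upd.
  destruct (Nat.eqb_spec (b+i) (b+r)), (Nat.eqb_spec i r); try lia; auto.
Qed.

Lemma unchanged_outside_upd b m R r v :
  r < m -> unchanged_outside b m R (upd R (b+r) v).
Proof. intros Hr k Hk. apply upd_other. lia. Qed.

Lemma unchanged_outside_trans b m R1 R2 R3 :
  unchanged_outside b m R1 R2 -> unchanged_outside b m R2 R3 -> unchanged_outside b m R1 R3.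
Proof. intros H12 H23 k Hk. rewrite H23, H12; auto. Qed.

Lemma exec_reloc Y o b m h ins pc Rq R :
  ireg ins < m -> pc < h -> shifted b m R Rq ->
  exists R2, exec Y (reloc_instr o b h ins) (o + pc) R
             = (o + Nat.min (fst (exec Y ins pc Rq)) h, R2) /\
    shifted b m R2 (snd (exec Y ins pc Rq)) /\ unchanged_outside b m R R2.
Proof.
  intros Hr Hpc Hs.
  destruct ins as [r|r j|r]; cbn [exec reloc_instr ireg fst snd] in Hr |- *; rewrite (Hs r Hr).
  - eexists. split; [f_equal; rewrite Nat.min_l; lia|].
    split; [now apply shifted_upd|now apply unchanged_outside_upd].
  - destruct (Rq r) as [|n]; cbn [fst snd].
    + exists R. split; [reflexivity|split; [exact Hs|intros k _; reflexivity]].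
    + eexists. split; [f_equal; rewrite Nat.min_l; lia|].
      split; [now apply shifted_upd|now apply unchanged_outside_upd].
  - eexists. split; [f_equal; rewrite Nat.min_l; lia|].
    split; [now apply shifted_upd|now apply unchanged_outside_upd].
Qed.

Lemma reloc_spec Y P q o b m :
  regs_below m q -> code_at P o (reloc o b q) ->
  forall s s', reaches Y q s s' -> forall R, shifted b m R (snd s) ->
  exists R', reaches Y P (o + Nat.min (fst s) (length q), R)
                         (o + Nat.min (fst s') (length q), R') /\
    shifted b m R' (snd s') /\ unchanged_outside b m R R'.
Proof.
  intros Hq C s s' H. induction H as [s|[pc Rq] s2 s3 Hstep _ IH]; intros R Hs.
  - exists R. split; [constructor|split; [exact Hs|intros k _; reflexivity]].
  - unfold step in Hstep; simpl in Hstep |- *.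
    destruct (nth_error q pc) as [ins|] eqn:E; [|discriminate]. injection Hstep as <-.
    assert (Hpc : pc < length q) by (apply nth_error_Some; congruence).
    assert (Hr : ireg ins < m) by (apply Hq; eapply nth_error_In; eauto).
    assert (EP : nth_error P (o + pc) = Some (reloc_instr o b (length q) ins)).
    { rewrite C by (unfold reloc; now rewrite length_map).
      unfold reloc. now rewrite nth_error_map, E. }
    destruct (exec_reloc Y o b m (length q) ins pc Rq R Hr Hpc Hs) as [R2 [Hexec [Hs2 Hu2]]].
    destruct (IH R2 Hs2) as [R' [Hreach [Hs' Hu']]].
    exists R'. split; [|split; [exact Hs'|eapply unchanged_outside_trans; eauto]].
    rewrite Nat.min_l by lia. eapply reaches_step; [|exact Hreach].
    unfold step; simpl. now rewrite EP, Hexec.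
Qed.

Definition call_code (a r b m z : nat) (q : prog) : prog :=
  clear_block a b m z ++ move_code (a+2*m) r b z ++ reloc (a+2*m+3) b q ++
  move_code (a+2*m+3+length q) b r z.

Lemma call_code_length a r b m z q : length (call_code a r b m z q) = 2*m + 6 + length q.
Proof.
  unfold call_code. rewrite !length_app, clear_block_length. unfold reloc.
  rewrite length_map. simpl. lia.
Qed.

Lemma call_code_spec X Y P q a r b m z R :
  regs_below m q -> 0 < m -> computes_with Y q X ->
  code_at P a (call_code a r b m z q) -> r < b -> b + m <= z -> R z = 0 ->
  exists R', reaches Y P (a, R) (a + (2*m + 6 + length q), R') /\
    R' r = bit (X (R r)) /\
    (forall k, k <> r -> (k < b \/ b + m <= k) -> R' k = R k).
Proof.
  intros Hq Hm Hc C Hr Hz H0. unfold call_code in C.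
  apply code_at_app in C as [C1 C]. apply code_at_app in C as [C2 C].
  apply code_at_app in C as [C3 C4].
  rewrite clear_block_length in C2, C3, C4. simpl in C3, C4.
  unfold reloc in C4 at 1. rewrite length_map in C4.
  destruct (clear_block_spec Y P m a b z R C1) as [R1 [S1 [Hzero1 Hu1]]]; [lia|auto|].
  pose proof (move_code_spec Y P _ r b z R1 C2) as S2.
  set (R2 := upd (upd R1 b (R1 b + R1 r)) r 0) in S2.
  destruct (proj1 (computes_with_reaches Y q X) Hc (R r)) as [pc [Rq [Sq [Hpc Hbit]]]].
  destruct (reloc_spec Y P q _ b m Hq C3 _ _ Sq R2) as [R3 [S3 [Hs3 Hu3]]].
  { intros [|i] Hi; unfold R2, init; simpl.
    - rewrite Nat.add_0_r, upd_other, upd_same by lia.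
      specialize (Hzero1 0 Hm). rewrite Nat.add_0_r in Hzero1. rewrite Hzero1, Hu1 by lia. auto.
    - rewrite !upd_other by lia. rewrite Hzero1 by lia. auto. }
  simpl fst in S3. rewrite Nat.min_l, Nat.min_r, Nat.add_0_r in S3 by lia.
  assert (HR3z : R3 z = 0).
  { rewrite Hu3 by lia. unfold R2. rewrite !upd_other by lia. rewrite Hu1 by lia. auto. }
  pose proof (move_code_spec Y P _ b r z R3 C4 ltac:(lia) ltac:(lia) ltac:(lia) HR3z) as S4.
  eexists. split; [|split].
  - eapply reaches_trans; [exact S1|].
    eapply reaches_trans; [apply S2; try lia; rewrite Hu1; auto; lia|].
    eapply reaches_trans; [exact S3|].
    replace (a + (2 * m + 6 + length q)) with (a + 2 * m + 3 + length q + 3) by lia. exact S4.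
  - rewrite upd_other, upd_same, Hu3 by lia. unfold R2. rewrite upd_same.
    specialize (Hs3 0 Hm). cbn [snd] in Hs3. rewrite Nat.add_0_r in Hs3. now rewrite Hs3, Hbit.
  - intros k Hk1 Hk2. rewrite !upd_other by lia. rewrite Hu3 by lia.
    unfold R2. rewrite !upd_other by lia. apply Hu1. lia.
Qed.

(** * Transitivity of Turing reducibility *)

Section Compile.
(* Instruction [pc] of [p] becomes a block starting at [pc * block_size], padded with
   unreachable instructions, so that jump targets are just scaled.  An oracle query runs
   [q] on the registers above those of [p] (all below [b]). *)
Variables (q : prog) (b : nat).

Definition sub_regs : nat := S (max_reg q).
Definition zero_reg : nat := b + sub_regs.
Definition block_size : nat := 2 * sub_regs + 7 + length q.

Definition compile_instr (pc : nat) (ins : instr) : prog :=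
  let a := pc * block_size in
  match ins with
  | INC r => [INC r; DECJZ zero_reg (a + block_size)] ++ repeat (INC 0) (block_size - 2)
  | DECJZ r j =>
      [DECJZ r (j * block_size); DECJZ zero_reg (a + block_size)] ++
      repeat (INC 0) (block_size - 2)
  | ORC r => call_code a r b sub_regs zero_reg q ++ [DECJZ zero_reg (a + block_size)]
  end.

Fixpoint compile (pc : nat) (p : prog) : prog :=
  match p with
  | [] => []
  | ins :: p' => compile_instr pc ins ++ compile (S pc) p'
  end.

Lemma compile_instr_length pc ins : length (compile_instr pc ins) = block_size.
Proof.
  unfold block_size.
  destruct ins; cbn [compile_instr]; rewrite ?length_app, ?repeat_length, ?call_code_length;
    simpl; lia.
Qed.

Lemma compile_length p : forall pc, length (compile pc p) = length p * block_size.
Proof.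
  induction p as [|ins p IH]; intros pc; cbn [compile length]; auto.
  rewrite length_app, compile_instr_length, IH. lia.
Qed.

Lemma compile_code_at p : forall pc i ins, nth_error p i = Some ins ->
  code_at (compile pc p) (i * block_size) (compile_instr (pc + i) ins).
Proof.
  induction p as [|ins' p IH]; intros pc [|i] ins E; simpl in E; try discriminate.
  - injection E as <-. rewrite Nat.add_0_r. intros j Hj. simpl.
    rewrite nth_error_app1; auto.
  - intros j Hj. rewrite compile_instr_length in Hj. cbn [compile].
    rewrite nth_error_app2, compile_instr_length by (rewrite compile_instr_length; lia).
    replace (S i * block_size + j - block_size) with (i * block_size + j) by lia.
    replace (pc + S i) with (S pc + i) by lia.
    apply IH; [exact E|now rewrite compile_instr_length].
Qed.

Lemma compile_instr_spec X Y p pc ins R R' :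
  computes_with Y q X -> regs_below b p -> nth_error p pc = Some ins ->
  (forall k, k < b -> R' k = R k) -> R' zero_reg = 0 ->
  exists R'', reaches Y (compile 0 p) (pc * block_size, R')
                        (fst (exec X ins pc R) * block_size, R'') /\
    (forall k, k < b -> R'' k = snd (exec X ins pc R) k) /\ R'' zero_reg = 0.
Proof.
  intros Hc Hp E Hagree Hz.
  pose proof (compile_code_at p 0 pc ins E) as C. simpl in C.
  assert (Hr : ireg ins < b) by (apply Hp; eapply nth_error_In; eauto).
  assert (Hb : b < zero_reg) by (unfold zero_reg, sub_regs; lia).
  destruct ins as [r|r j|r]; cbn [ireg compile_instr exec fst snd] in Hr, C |- *;
    replace (pc * block_size + block_size) with (S pc * block_size) in C by lia.
  - eexists. split; [|split].
    + exec_at C 0. jump_at C 1; [rewrite upd_other; auto; lia|]. constructor.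
    + intros k Hk. unfold upd. destruct (Nat.eqb k r); rewrite ?Hagree; auto.
    + rewrite upd_other; auto; lia.
  - destruct (R r) as [|n] eqn:Er; cbn [fst snd].
    + exists R'. split; auto. exec_at C 0. rewrite Hagree, Er by auto. constructor.
    + eexists. split; [|split].
      * exec_at C 0. rewrite Hagree, Er by auto.
        jump_at C 1; [rewrite upd_other; auto; lia|]. constructor.
      * intros k Hk. unfold upd. destruct (Nat.eqb k r); rewrite ?Hagree; auto.
      * rewrite upd_other; auto; lia.
  - apply code_at_app in C as [C1 C2]. rewrite call_code_length in C2.
    destruct (call_code_spec X Y _ q _ r b sub_regs zero_reg R'
                (regs_below_max_reg q) ltac:(unfold sub_regs; lia) Hc C1 Hr
                ltac:(unfold zero_reg; lia) Hz) as [R1 [S1 [Hr1 Hu1]]].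
    assert (Hz1 : R1 zero_reg = 0) by (rewrite Hu1; auto; lia).
    exists R1. split; [|split; auto].
    + eapply reaches_trans; [exact S1|]. jump_at C2 0; [exact Hz1|].
      constructor.
    + intros k Hk. unfold upd. destruct (Nat.eqb_spec k r) as [->|].
      * rewrite Hr1, Hagree; auto.
      * rewrite Hu1; auto.
Qed.

Lemma compile_spec X Y p :
  computes_with Y q X -> regs_below b p ->
  forall s s', reaches X p s s' ->
  forall R', (forall k, k < b -> R' k = snd s k) -> R' zero_reg = 0 ->
  exists R'', reaches Y (compile 0 p) (fst s * block_size, R')
                                      (fst s' * block_size, R'') /\
    (forall k, k < b -> R'' k = snd s' k) /\ R'' zero_reg = 0.
Proof.
  intros Hc Hp s s' H. induction H as [s|[pc R] s2 s3 Hstep _ IH]; intros R' Hagree Hz.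
  - exists R'. split; [constructor|auto].
  - unfold step in Hstep; simpl in Hstep.
    destruct (nth_error p pc) as [ins|] eqn:E; [|discriminate]. injection Hstep as <-.
    destruct (compile_instr_spec X Y p pc ins R R' Hc Hp E Hagree Hz)
      as [R1 [S1 [Hagree1 Hz1]]].
    destruct (IH R1 Hagree1 Hz1) as [R'' [S2 H2]].
    exists R''. split; auto. eapply reaches_trans; eauto.
Qed.

End Compile.

Lemma Treducible_trans A X Y : Treducible A X -> Treducible X Y -> Treducible A Y.
Proof.
  intros [p Hp] [q Hq]. set (b := S (max_reg p)).
  exists (compile q b 0 p). apply computes_with_reaches. intros n.
  destruct (proj1 (computes_with_reaches _ _ _) Hp n) as [pc [R [Sp [Hpc HR]]]].
  assert (Hz : init n (zero_reg q b) = 0).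
  { unfold init, zero_reg, sub_regs. destruct (Nat.eqb_spec (b + S (max_reg q)) 0); lia. }
  destruct (compile_spec q b X Y p Hq (regs_below_max_reg p) _ _ Sp (init n))
    as [R'' [S1 [Hagree _]]]; auto.
  exists (pc * block_size q), R''. split; [|split].
  - exact S1.
  - rewrite compile_length. now apply Nat.mul_le_mono_r.
  - rewrite Hagree by (unfold b; lia). exact HR.
Qed.

(** * Splicing along the triangular numbers *)

(* After [n] steps from [(0, 0, 0)] the walk is at [(k, m, k - m)] with [n = k(k+1)/2 + m];
   the sparse positions [m = 0] are the triangular numbers, the [k]-th one carrying [Z k]. *)
Definition tri_step (x : nat * nat * nat) : nat * nat * nat :=
  match x with
  | (k, m, 0) => (S k, 0, S m)
  | (k, m, S d) => (k, S m, d)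
  end.

Definition tri_walk (n : nat) : nat * nat * nat := Nat.iter n tri_step (0, 0, 0).

Definition sparse (n : nat) : bool := Nat.eqb (snd (fst (tri_walk n))) 0.

Definition sparse_index (n : nat) : nat := fst (fst (tri_walk n)).

Definition splice (X Z : Cantor) : Cantor :=
  fun n => if sparse n then Z (sparse_index n) else X n.

Fixpoint triangle (k : nat) : nat := match k with 0 => 0 | S k' => S k' + triangle k' end.

Lemma iter_tri_step_row k j : j <= k -> Nat.iter j tri_step (k, 0, k) = (k, j, k - j).
Proof.
  induction j as [|j IH]; intros Hj; [simpl; do 2 f_equal; lia|].
  rewrite Nat.iter_succ, IH by lia. simpl.
  destruct (k - j) as [|d] eqn:E; [lia|]. do 2 f_equal; lia.
Qed.

Lemma tri_walk_triangle k : tri_walk (triangle k) = (k, 0, k).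
Proof.
  induction k as [|k IH]; [reflexivity|].
  unfold tri_walk in *. cbn [triangle].
  rewrite Nat.iter_add, IH, Nat.iter_succ, iter_tri_step_row, Nat.sub_diag by lia.
  reflexivity.
Qed.

(* Registers: [1, 2, 3] hold the walk, [4] counts the remaining steps. *)
Definition tri_loop_code (a z : nat) : prog :=
  [DECJZ 4 (a+10); DECJZ 3 (a+4); INC 2; DECJZ z a] ++ move_code (a+4) 2 3 z ++
  [INC 3; INC 1; DECJZ z a].

Lemma tri_loop_spec X P a z : 6 <= z -> code_at P a (tri_loop_code a z) ->
  forall c R, R 4 = c -> R z = 0 ->
  exists R', reaches X P (a, R) (a+10, R') /\
    (R' 1, R' 2, R' 3) = Nat.iter c tri_step (R 1, R 2, R 3) /\
    R' 0 = R 0 /\ R' 5 = R 5 /\ R' z = 0.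
Proof.
  intros Hz C. pose proof C as Cm. unfold tri_loop_code in Cm.
  apply code_at_app in Cm as [_ Cm]. apply code_at_app in Cm as [Cm _]. simpl in Cm.
  induction c as [|c IH]; intros R H4 H0.
  - exists R. split; [|auto]. exec_at C 0. rewrite H4. constructor.
  - exec_at_ex C 0. rewrite H4. exec_at_ex C 1. rewrite upd_other by lia.
    rewrite Nat.iter_succ_r.
    destruct (R 3) as [|d] eqn:E3.
    + set (R1 := upd R 4 c).
      eapply reaches_then;
        [apply (move_code_spec X P (a+4) 2 3 z R1 Cm); try lia; unfold R1; rewrite upd_other; lia|].
      exec_at_ex C 7. exec_at_ex C 8. jump_at_ex C 9.
      { rewrite !upd_other by lia. unfold R1; rewrite upd_other; lia. }
      match goal with |- exists R', reaches _ _ (_, ?RR) _ /\ _ => set (R2 := RR) end.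
      destruct (IH R2) as [R' [S2 [E1 [E2 [E3' E4]]]]].
      { unfold R2, R1. rewrite !upd_other by lia. apply upd_same. }
      { unfold R2, R1. rewrite !upd_other by lia. auto. }
      exists R'. split; [exact S2|]. split; [|split; [|split]]; auto.
      rewrite E1. unfold R2, R1, upd; simpl. now rewrite E3.
    + exec_at_ex C 2. jump_at_ex C 3. { rewrite !upd_other by lia. auto. }
      match goal with |- exists R', reaches _ _ (_, ?RR) _ /\ _ => set (R2 := RR) end.
      destruct (IH R2) as [R' [S2 [E1 [E2 [E3' E4]]]]].
      { unfold R2. rewrite !upd_other by lia. apply upd_same. }
      { unfold R2. rewrite !upd_other by lia. auto. }
      exists R'. split; [exact S2|]. split; [|split; [|split]]; auto.
Qed.

(* Register layout: [0] input/output, [1, 2, 3] the walk, [4] loop counter, [5] a copy of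
   the input, [6, 6 + m) the registers of [q], then the zero register. *)
Definition splice_code (q : prog) : prog :=
  let m := S (max_reg q) in let z := 6 + m in let c := 2*m + 6 + length q in
  move2_code 0 0 4 5 z ++ tri_loop_code 4 z ++ [DECJZ 2 (19 + c)] ++ move_code 15 5 0 z ++
  call_code 18 0 6 m z q ++ [DECJZ z (23 + c)] ++ move_code (19 + c) 1 0 z ++ [ORC 0].

Lemma splice_code_walk q Z n :
  exists R, reaches Z (splice_code q) (0, init n) (14, R) /\
    (R 1, R 2, R 3) = tri_walk n /\ R 0 = 0 /\ R 5 = n /\ R (6 + S (max_reg q)) = 0.
Proof.
  set (z := 6 + S (max_reg q)).
  pose proof (code_at_whole (splice_code q)) as C. unfold splice_code at 2 in C. fold z in C.
  apply code_at_app in C as [C_copy C]. apply code_at_app in C as [C_loop _].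
  assert (Hz : init n z = 0) by reflexivity.
  pose proof (move2_code_spec Z _ 0 0 4 5 z (init n) C_copy) as S1.
  match type of S1 with _ -> _ -> _ -> _ -> _ -> _ -> _ -> reaches _ _ _ (_, ?RR) =>
    set (R1 := RR) in S1 end.
  destruct (tri_loop_spec Z _ 4 z ltac:(unfold z; lia) C_loop n R1)
    as [R2 [S2 [W2 [E0 [E5 Ez]]]]]; [reflexivity|unfold R1; now rewrite !upd_other|].
  exists R2. split; [|split; [exact W2|auto]].
  eapply reaches_trans; [apply S1; try exact Hz; unfold z; lia|exact S2].
Qed.

Lemma Treducible_splice X Z : Treducible X Z -> Treducible (splice X Z) Z.
Proof.
  intros [q Hq]. exists (splice_code q). apply computes_with_reaches. intros n.
  set (m := S (max_reg q)). set (z := 6 + m). set (c := 2*m + 6 + length q).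
  assert (Hlen : length (splice_code q) = 23 + c).
  { unfold splice_code. rewrite !length_app, call_code_length. simpl. fold m c. lia. }
  pose proof (code_at_whole (splice_code q)) as C. unfold splice_code at 2 in C. fold m z c in C.
  apply code_at_app in C as [_ C]. apply code_at_app in C as [_ C].
  apply code_at_app in C as [C_test C]. apply code_at_app in C as [C_input C].
  apply code_at_app in C as [C_call C]. apply code_at_app in C as [C_skip C].
  apply code_at_app in C as [C_index C_query].
  apply (code_at_offset _ _ 14) in C_test; [|reflexivity].
  apply (code_at_offset _ _ 15) in C_input; [|reflexivity].
  apply (code_at_offset _ _ 18) in C_call; [|reflexivity].
  rewrite call_code_length in C_skip, C_index, C_query. fold c in C_skip, C_index, C_query.
  apply (code_at_offset _ _ (18 + c)) in C_skip; [|simpl; lia].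
  apply (code_at_offset _ _ (19 + c)) in C_index; [|simpl; lia].
  apply (code_at_offset _ _ (22 + c)) in C_query; [|simpl; lia].
  destruct (splice_code_walk q Z n) as [R [S1 [W [E0 [E5 Ez]]]]]. fold m z in Ez.
  assert (Hsplice : splice X Z n = if Nat.eqb (R 2) 0 then Z (R 1) else X n).
  { unfold splice, sparse, sparse_index. now rewrite <- W. }
  destruct (R 2) as [|d] eqn:E2.
  - pose proof (move_code_spec Z _ (19 + c) 1 0 z R C_index) as S2.
    set (R2 := upd (upd R 0 (R 0 + R 1)) 1 0) in S2.
    exists (23 + c), (upd R2 0 (bit (Z (R2 0)))). split; [|split; [lia|]].
    + eapply reaches_trans; [exact S1|]. jump_at C_test 0; [exact E2|].
      eapply reaches_trans; [apply S2; try exact Ez; unfold z; lia|].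
      exec_at C_query 0. replace (S (19 + c + 3)) with (23 + c) by lia. constructor.
    + rewrite upd_same, Hsplice. unfold R2. now rewrite upd_other, upd_same, E0 by lia.
  - pose proof (move_code_spec Z _ 15 5 0 z (upd R 2 d) C_input) as S2.
    set (R2 := upd (upd (upd R 2 d) 0 _) 5 0) in S2.
    assert (HR2z : R2 z = 0) by (unfold R2; rewrite !upd_other by (unfold z; lia); exact Ez).
    destruct (call_code_spec X Z _ q 18 0 6 m z R2 (regs_below_max_reg q)
                ltac:(unfold m; lia) Hq C_call ltac:(lia) ltac:(unfold z; lia) HR2z)
      as [R3 [S3 [E30 Hu3]]].
    exists (23 + c), R3. split; [|split; [lia|]].
    + eapply reaches_trans; [exact S1|]. exec_at C_test 0. rewrite E2.
      eapply reaches_trans; [apply S2; try (unfold z; lia); rewrite upd_other; auto; lia|].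
      eapply reaches_trans; [exact S3|]. fold c.
      jump_at C_skip 0; [rewrite Hu3; auto; unfold z; lia|]. constructor.
    + rewrite E30, Hsplice. unfold R2.
      now rewrite upd_other, upd_same, !upd_other, E0, E5 by lia.
Qed.

(* Adds [triangle R_1] to [R_0]: each round moves [R_1 - 1] into [R_0] and back via [R_2]. *)
Definition triangle_code : prog :=
  move_code 0 0 1 3 ++ [DECJZ 1 13; INC 0] ++ move2_code 5 1 0 2 3 ++ move_code 9 2 1 3 ++
  [DECJZ 3 3; ORC 0].

Lemma triangle_code_loop X : forall v R, R 1 = v -> R 2 = 0 -> R 3 = 0 ->
  exists R', reaches X triangle_code (3, R) (13, R') /\ R' 0 = R 0 + triangle v /\ R' 3 = 0.
Proof.
  pose proof (code_at_whole triangle_code) as C. unfold triangle_code at 2 in C.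
  apply code_at_app in C as [_ C]. apply code_at_app in C as [C_test C].
  apply code_at_app in C as [C_add C]. apply code_at_app in C as [C_restore C_back].
  simpl in C_test, C_add, C_restore, C_back.
  induction v as [|v IH]; intros R H1 H2 H3.
  - exists R. split; [|split; auto; simpl; lia]. exec_at C_test 0. rewrite H1. constructor.
  - exec_at_ex C_test 0. rewrite H1. exec_at_ex C_test 1.
    set (R1 := upd (upd R 1 v) 0 (S (upd R 1 v 0))).
    eapply reaches_then;
      [apply (move2_code_spec X _ 5 1 0 2 3 R1 C_add); try lia; unfold R1; rewrite !upd_other; lia|].
    match goal with |- exists R', reaches _ _ (_, ?RR) _ /\ _ => set (R2 := RR) end.
    eapply reaches_then;
      [apply (move_code_spec X _ 9 2 1 3 R2 C_restore); try lia; unfold R2, R1; rewrite !upd_other; lia|].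
    match goal with |- exists R', reaches _ _ (_, ?RR) _ /\ _ => set (R3 := RR) end.
    jump_at_ex C_back 0. { unfold R3, R2, R1; rewrite !upd_other; lia. }
    destruct (IH R3) as [R' [S1 [E1 E2]]]; try (unfold R3, R2, R1, upd; simpl; lia).
    exists R'. split; [exact S1|split; [|exact E2]].
    rewrite E1. unfold R3, R2, R1, upd; simpl. lia.
Qed.

Lemma Treducible_splice_r X Z : Treducible Z (splice X Z).
Proof.
  exists triangle_code. apply computes_with_reaches. intros k.
  pose proof (code_at_whole triangle_code) as C. unfold triangle_code at 2 in C.
  apply code_at_app in C as [C_init C]. apply code_at_app in C as [_ C].
  apply code_at_app in C as [_ C]. apply code_at_app in C as [_ C_query].
  simpl in C_query.
  pose proof (move_code_spec (splice X Z) _ 0 0 1 3 (init k) C_init) as S1.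
  destruct (triangle_code_loop (splice X Z) k (upd (upd (init k) 1 (init k 1 + init k 0)) 0 0))
    as [R' [S2 [E1 E2]]]; try reflexivity.
  exists 14, (upd R' 0 (bit (splice X Z (R' 0)))). split; [|split; [reflexivity|]].
  - eapply reaches_trans; [apply S1; auto|].
    eapply reaches_trans; [exact S2|]. exec_at C_query 1. constructor.
  - rewrite upd_same, E1. simpl.
    unfold splice, sparse, sparse_index. rewrite tri_walk_triangle. reflexivity.
Qed.

(** * Minimal degrees below maximal antichains *)

Lemma Treducible_refl X : Treducible X X.
Proof. exists [ORC 0]. intros n. exists 1. eexists. split; reflexivity. Qed.

Lemma Tequiv_splice X Y : Treducible X Y -> Tequiv (splice X Y) Y.
Proof. intros H. split; [now apply Treducible_splice|apply Treducible_splice_r]. Qed.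

Lemma antichain_add_minimal B X :
  antichain B -> minimal_degree X -> (forall Y, B Y -> ~ Treducible X Y) ->
  antichain (fun V => B V \/ Tequiv V X).
Proof.
  intros [Hnc [Hclosed Hincomp]] [HX Hmin] Habove. split; [|split].
  - intros W [HW|[_ HXW]] Hc; [eapply Hnc; eauto|].
    apply HX. eapply Treducible_trans; eauto.
  - intros W V [HW|[HWX HXW]] [HVW HWV]; [left|right].
    { exact (Hclosed W V HW (conj HVW HWV)). }
    split; eapply Treducible_trans; eauto.
  - (* a set of [B] below [X] would be computable or above [X] *)
    assert (Hnot_below : forall W V, B W -> Tequiv V X -> ~ Tless W V).
    { intros W V HW [HVX _] [HWV HVW].
      destruct (Hmin W (Treducible_trans _ _ _ HWV HVX)) as [Hc|HXW].
      - eapply Hnc; eauto.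
      - apply HVW. eapply Treducible_trans; eauto. }
    assert (Hnot_above : forall W V, B W -> Tequiv V X -> ~ Tless V W).
    { intros W V HW [_ HXV] [HVW _]. eapply Habove; eauto. eapply Treducible_trans; eauto. }
    intros W V [HW|HW] [HV|HV] Hne; auto.
    exfalso. apply Hne. destruct HW, HV. split; eapply Treducible_trans; eauto.
Qed.

Lemma maximal_antichain_above_minimal B X :
  maximal_antichain B -> minimal_degree X -> exists Y, B Y /\ Treducible X Y.
Proof.
  intros [HB Hmax] HX. apply NNPP. intros Hnone.
  assert (HnotB : ~ B X) by (intros HBX; apply Hnone; exists X; split; auto; apply Treducible_refl).
  apply (Hmax X (proj1 HX) HnotB). apply antichain_add_minimal; auto.
  intros Y HY HXY. apply Hnone. now exists Y.
Qed.

Definition agree_off_sparse (X Z : Cantor) : Prop := forall n, sparse n = false -> X n = Z n.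

Lemma minimal_agrees_off_sparse B X :
  maximal_antichain B -> minimal_degree X -> exists Z, B Z /\ agree_off_sparse X Z.
Proof.
  intros HB HX. destruct (maximal_antichain_above_minimal B X HB HX) as [Y [HY HXY]].
  exists (splice X Y). split.
  - apply ((proj1 (proj2 (proj1 HB))) Y); auto. now apply Tequiv_splice.
  - intros n Hn. unfold splice. now rewrite Hn.
Qed.

(** * Hausdorff nullity *)

Fixpoint sparse_variants (p : nat) (sg : list bool) : list (list bool) :=
  match sg with
  | [] => [[]]
  | b :: sg' =>
      let V := sparse_variants (S p) sg' in
      if sparse p then map (cons true) V ++ map (cons false) V else map (cons b) V
  end.

Fixpoint sparse_count (p n : nat) : nat :=
  match n with
  | O => O
  | S n' => bit (sparse p) + sparse_count (S p) n'
  end.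

Lemma sparse_variants_length sg : forall p t, In t (sparse_variants p sg) -> length t = length sg.
Proof.
  induction sg as [|b sg IH]; intros p t H; simpl in *.
  - now destruct H as [<-|[]].
  - destruct (sparse p); [apply in_app_or in H; destruct H as [H|H]|];
      apply in_map_iff in H as [t' [<- H]]; simpl; f_equal; eauto.
Qed.

Lemma sparse_variants_count sg : forall p,
  length (sparse_variants p sg) = 2 ^ sparse_count p (length sg).
Proof.
  induction sg as [|b sg IH]; intros p; simpl; auto.
  destruct (sparse p); rewrite ?length_app, !length_map, IH; simpl; lia.
Qed.

Lemma sparse_variants_cover X Z (HXZ : agree_off_sparse X Z) sg : forall p,
  (forall i, i < length sg -> nth i sg false = Z (p + i)) ->
  exists t, In t (sparse_variants p sg) /\
    forall i, i < length t -> nth i t false = X (p + i).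
Proof.
  induction sg as [|b sg IH]; intros p H.
  - exists []. split; [now left|]. simpl; intros; lia.
  - destruct (IH (S p)) as [t [Ht Hn]].
    { intros i Hi. replace (S p + i) with (p + S i) by lia. apply (H (S i)). simpl; lia. }
    exists (X p :: t). split.
    + simpl. destruct (sparse p) eqn:E.
      * apply in_or_app. destruct (X p); [left|right]; now apply in_map.
      * replace (X p) with b; [now apply in_map|].
        rewrite HXZ by exact E. specialize (H 0 ltac:(simpl; lia)).
        now rewrite Nat.add_0_r in H.
    + intros [|i] Hi; simpl; [f_equal; lia|].
      rewrite Hn by (simpl in Hi; lia). f_equal; lia.
Qed.

Lemma sparse_count_succ n : forall p, sparse_count p (S n) = sparse_count p n + bit (sparse (p + n)).
Proof.
  induction n as [|n IH]; intros p.
  - simpl. now rewrite !Nat.add_0_r.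
  - change (sparse_count p (S (S n))) with (bit (sparse p) + sparse_count (S p) (S n)).
    rewrite IH. simpl. replace (p + S n) with (S p + n) by lia. simpl. lia.
Qed.

Lemma tri_walk_invariant N : forall k m d, tri_walk N = (k, m, d) ->
  m + d = k /\ 2 * N = k * (k + 1) + 2 * m /\
  sparse_count 0 N = k + bit (negb (Nat.eqb m 0)).
Proof.
  induction N as [|N IH]; intros k m d H.
  - injection H as <- <- <-. simpl. lia.
  - unfold tri_walk in H. rewrite Nat.iter_succ in H. fold (tri_walk N) in H.
    destruct (tri_walk N) as [[k0 m0] d0] eqn:E.
    destruct (IH k0 m0 d0 eq_refl) as [I1 [I2 I3]].
    rewrite sparse_count_succ, Nat.add_0_l. unfold sparse. rewrite E.
    destruct d0, m0; injection H as <- <- <-; simpl in *; rewrite I3;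
      (split; [lia|split; [nia|lia]]).
Qed.

Lemma sparse_count_bound L N : sparse_count 0 N * L <= N + 2 * L * L.
Proof.
  destruct (tri_walk N) as [[k m] d] eqn:E.
  destruct (tri_walk_invariant N k m d E) as [I1 [I2 I3]].
  assert (sparse_count 0 N <= k + 1) by (rewrite I3; destruct (Nat.eqb m 0); simpl; lia).
  destruct (le_lt_dec (k + 1) (2 * L)); [nia|].
  assert (2 * L * (k + 1) <= k * (k + 1)) by nia. nia.
Qed.

Local Open Scope R_scope.

Definition cyl_sum (s : R) (l : list (list bool)) : R :=
  fold_right (fun sg acc => Rpower 2 (- (s * INR (length sg))) + acc) 0 l.

Definition list_cost (s : R) (L : list (option (list bool))) : R :=
  fold_right (fun c acc => cost s c + acc) 0 L.

(* Every finite family [D j] is preceded by a [None], so that the [N]-th prefix of the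
   flattening already has length at least [N]. *)
Definition slot (D : nat -> list (list bool)) (j : nat) : list (option (list bool)) :=
  None :: map Some (D j).

Fixpoint flat_prefix (D : nat -> list (list bool)) (N : nat) : list (option (list bool)) :=
  match N with
  | O => []
  | S N' => flat_prefix D N' ++ slot D N'
  end.

Definition flatten (D : nat -> list (list bool)) (i : nat) : option (list bool) :=
  nth i (flat_prefix D (S i)) None.

Lemma cost_nonneg s c : 0 <= cost s c.
Proof. destruct c; simpl; [left; apply exp_pos|lra]. Qed.

Lemma list_cost_nonneg s L : 0 <= list_cost s L.
Proof. induction L as [|c L IH]; simpl; [lra|]. pose proof (cost_nonneg s c). lra. Qed.

Lemma list_cost_app s L1 L2 : list_cost s (L1 ++ L2) = list_cost s L1 + list_cost s L2.
Proof. induction L1; simpl; lra. Qed.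

Lemma list_cost_flat_prefix s D N :
  list_cost s (flat_prefix D (S N)) = sum_f_R0 (fun j => cyl_sum s (D j)) N.
Proof.
  assert (Hslot : forall j, list_cost s (slot D j) = cyl_sum s (D j)).
  { intros j. unfold slot. simpl. induction (D j); simpl; lra. }
  induction N as [|N IH].
  - change (flat_prefix D 1) with ([] ++ slot D 0). rewrite list_cost_app, Hslot. simpl. lra.
  - change (flat_prefix D (S (S N))) with (flat_prefix D (S N) ++ slot D (S N)).
    rewrite list_cost_app, IH, Hslot. reflexivity.
Qed.

Lemma flat_prefix_length D N : (N <= length (flat_prefix D N))%nat.
Proof. induction N; simpl; [lia|]. rewrite length_app. simpl. lia. Qed.

Lemma flat_prefix_extend D N M : (N <= M)%nat -> exists L, flat_prefix D M = flat_prefix D N ++ L.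
Proof.
  induction 1 as [|M _ [L HL]]; [exists []; now rewrite app_nil_r|].
  exists (L ++ slot D M). simpl. now rewrite HL, app_assoc.
Qed.

Lemma flatten_nth D i M : (i < M)%nat -> flatten D i = nth i (flat_prefix D M) None.
Proof.
  intros H. unfold flatten. destruct (flat_prefix_extend D (S i) M) as [L ->]; [lia|].
  rewrite app_nth1; auto. pose proof (flat_prefix_length D (S i)). lia.
Qed.

Lemma sum_cost_nth_le s L N : sum_f_R0 (fun i => cost s (nth i L None)) N <= list_cost s L.
Proof.
  revert N. induction L as [|c L IH]; intros N.
  - rewrite (sum_eq _ (fun _ => 0)) by (intros [|i] _; reflexivity).
    induction N as [|N IHN]; simpl in *; lra.
  - destruct N as [|N]; [simpl; pose proof (list_cost_nonneg s L); lra|].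
    rewrite decomp_sum by lia. simpl. specialize (IH N). lra.
Qed.

Lemma Hnull_of_finite_covers s (A : Cantor -> Prop) :
  (forall eps, 0 < eps -> exists D : nat -> list (list bool),
     (forall X, A X -> exists j sg, In sg (D j) /\ prefix sg X) /\
     (forall N, sum_f_R0 (fun j => cyl_sum s (D j)) N <= eps)) ->
  Hnull s A.
Proof.
  intros H eps Heps. destruct (H eps Heps) as [D [Hcov Hsum]]. exists (flatten D). split.
  - intros X HX. destruct (Hcov X HX) as [j [sg [Hin Hp]]].
    assert (Hslot : In (Some sg) (slot D j)) by (right; apply in_map; auto).
    destruct (In_nth _ _ None Hslot) as [k [Hk Hnth]].
    set (i := (length (flat_prefix D j) + k)%nat).
    exists i, sg. split; auto.
    rewrite (flatten_nth D i (S i + S j)) by lia.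
    destruct (flat_prefix_extend D (S j) (S i + S j)) as [L ->]; [lia|].
    cbn [flat_prefix]. rewrite <- app_assoc, app_nth2 by (unfold i; lia).
    replace (i - length (flat_prefix D j))%nat with k by (unfold i; lia).
    now rewrite app_nth1.
  - intros N. eapply Rle_trans; [|apply (Hsum N)]. rewrite <- list_cost_flat_prefix.
    rewrite (sum_eq _ (fun i => cost s (nth i (flat_prefix D (S N)) None))).
    + apply sum_cost_nth_le.
    + intros i Hi. now rewrite <- (flatten_nth D i (S N)) by lia.
Qed.

Lemma cyl_sum_const t l n : (forall sg, In sg l -> length sg = n) ->
  cyl_sum t l = INR (length l) * Rpower 2 (- (t * INR n)).
Proof.
  induction l as [|sg l IH]; intros H; [simpl; lra|].
  change (cyl_sum t (sg :: l)) with (Rpower 2 (- (t * INR (length sg))) + cyl_sum t l).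
  change (length (sg :: l)) with (S (length l)).
  rewrite IH by (intros; apply H; now right).
  rewrite H by now left. rewrite S_INR. lra.
Qed.

Lemma INR_pow2 c : INR (2 ^ c) = Rpower 2 (INR c).
Proof. rewrite pow_INR, Rpower_pow by lra. reflexivity. Qed.

(* The [2^(sparse_count 0 N)] variants each cost [2^(-(t-s)N)] times the string itself, and
   [sparse_count_bound] turns [1 <= L (t - s)] into [sparse_count 0 N <= (t-s)N + 2L]. *)
Lemma cyl_sum_sparse_variants s t L sg : (0 < L)%nat -> 1 <= INR L * (t - s) ->
  cyl_sum t (sparse_variants 0 sg) <= Rpower 2 (2 * INR L) * Rpower 2 (- (s * INR (length sg))).
Proof.
  intros HL H1.
  rewrite (cyl_sum_const t _ (length sg)) by (intros; eapply sparse_variants_length; eauto).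
  rewrite sparse_variants_count, INR_pow2, <- !Rpower_plus. apply Rle_Rpower; [lra|].
  pose proof (le_INR _ _ (sparse_count_bound L (length sg))) as Hb.
  rewrite mult_INR, !plus_INR, !mult_INR in Hb. simpl (INR 2) in Hb.
  set (c := INR (sparse_count 0 (length sg))) in *. set (N := INR (length sg)) in *.
  assert (0 < INR L) by (apply lt_0_INR; auto). assert (0 <= N) by apply pos_INR.
  assert (c <= N * (t - s) + 2 * INR L); [|lra].
  apply (Rmult_le_reg_r (INR L)); auto. nra.
Qed.

Lemma Hnull_agree_off_sparse s t (B : Cantor -> Prop) : Hnull s B -> s < t ->
  Hnull t (fun X => exists Z, B Z /\ agree_off_sparse X Z).
Proof.
  intros HB Hst. destruct (archimed_cor1 (t - s)) as [L [HL1 HL2]]; [lra|].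
  assert (H1 : 1 <= INR L * (t - s)).
  { assert (0 < INR L) by (apply lt_0_INR; auto).
    apply (Rmult_lt_compat_l (INR L)) in HL1; auto. rewrite Rinv_r in HL1 by lra. lra. }
  set (K := Rpower 2 (2 * INR L)). assert (HK : 0 < K) by apply exp_pos.
  apply Hnull_of_finite_covers. intros eps Heps.
  destruct (HB (eps / K)) as [C [Hcov Hsum]]; [apply Rdiv_lt_0_compat; auto|].
  exists (fun j => match C j with Some sg => sparse_variants 0 sg | None => [] end). split.
  - intros X [Z [HZ HXZ]]. destruct (Hcov Z HZ) as [i [sg [Ei Hp]]].
    destruct (sparse_variants_cover X Z HXZ sg 0) as [sg' [Hin Hp']]; [intros; apply Hp; auto|].
    exists i, sg'. rewrite Ei. split; auto.
  - intros N. apply Rle_trans with (sum_f_R0 (fun j => cost s (C j) * K) N).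
    + apply sum_Rle. intros j _. destruct (C j) as [sg|]; simpl; [|lra].
      rewrite Rmult_comm. now apply cyl_sum_sparse_variants.
    + rewrite <- scal_sum. specialize (Hsum N).
      apply Rmult_le_compat_l with (r := K) in Hsum; [|lra].
      replace (K * (eps / K)) with eps in Hsum by (field; lra). lra.
Qed.

Fixpoint all_strings (n : nat) : list (list bool) :=
  match n with
  | O => [[]]
  | S n' => map (cons true) (all_strings n') ++ map (cons false) (all_strings n')
  end.

Lemma all_strings_length n : forall sg, In sg (all_strings n) -> length sg = n.
Proof.
  induction n as [|n IH]; intros sg H; simpl in H; [now destruct H as [<-|[]]|].
  apply in_app_or in H.
  destruct H as [H|H]; apply in_map_iff in H as [sg' [<- H]]; simpl; f_equal; auto.
Qed.

Lemma all_strings_count n : length (all_strings n) = (2 ^ n)%nat.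
Proof. induction n; simpl; auto. rewrite length_app, !length_map, IHn. lia. Qed.

Lemma all_strings_cover n : forall X : Cantor, exists sg, In sg (all_strings n) /\ prefix sg X.
Proof.
  induction n as [|n IH]; intros X.
  - exists []. split; [now left|]. intros i Hi; simpl in Hi; lia.
  - destruct (IH (fun i => X (S i))) as [sg [Hin Hp]]. exists (X O :: sg). split.
    + simpl. apply in_or_app. destruct (X O); [left|right]; now apply in_map.
    + intros [|i] Hi; simpl; auto. apply Hp. simpl in Hi; lia.
Qed.

Lemma Hnull_2 (A : Cantor -> Prop) : Hnull 2 A.
Proof.
  apply Hnull_of_finite_covers. intros eps Heps.
  destruct (archimed_cor1 eps Heps) as [n [Hn Hn0]].
  exists (fun j => match j with O => all_strings n | _ => [] end). split.
  - intros X _. destruct (all_strings_cover n X) as [sg [Hin Hp]]. now exists O, sg.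
  - intros N. replace (sum_f_R0 _ N) with (cyl_sum 2 (all_strings n))
      by (induction N as [|N IH]; simpl; [reflexivity|rewrite <- IH; lra]).
    rewrite (cyl_sum_const 2 _ n), all_strings_count, INR_pow2, <- Rpower_plus
      by apply all_strings_length.
    replace (INR n + - (2 * INR n)) with (- INR n) by ring. rewrite Rpower_Ropp.
    apply Rle_trans with (/ INR n); [|lra].
    apply Rinv_le_contravar; [apply lt_0_INR; auto|].
    rewrite <- INR_pow2. apply le_INR, Nat.lt_le_incl, Nat.pow_gt_lin_r. lia.
Qed.

Lemma Hnull_subset s (A A' : Cantor -> Prop) :
  (forall X, A X -> A' X) -> Hnull s A' -> Hnull s A.
Proof. intros H HA eps Heps. destruct (HA eps Heps) as [C [Hc Hs]]. exists C. split; auto. Qed.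

Lemma is_dimH_exists (A : Cantor -> Prop) : exists d, is_dimH A d.
Proof.
  set (E := fun x => exists s, 0 <= s /\ Hnull s A /\ x = - s).
  destruct (completeness E) as [m [Hub Hlub]].
  - exists 0. intros x [s [Hs [_ ->]]]. lra.
  - exists (-2). exists 2. split; [lra|split; [apply Hnull_2|reflexivity]].
  - exists (- m). split.
    + intros s Hs HN. enough (- s <= m) by lra. apply Hub. now exists s.
    + intros t Ht. enough (m <= - t) by lra.
      apply Hlub. intros x [s [Hs [HN ->]]]. specialize (Ht s Hs HN). lra.
Qed.

Theorem mainTheorem12 (r : R) :
  is_dimH Min r ->
  forall B : Cantor -> Prop, maximal_antichain B ->
    exists d, is_dimH B d /\ r <= d.
Proof.
  intros Hr B HB. destruct (is_dimH_exists B) as [d Hd]. exists d. split; [exact Hd|].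
  apply (proj2 Hd). intros s Hs HBs. apply Rnot_lt_le. intros Hsr.
  assert (HMin : Hnull ((s + r) / 2) Min).
  { eapply Hnull_subset; [|apply (Hnull_agree_off_sparse s); [exact HBs|lra]].
    intros X HX. now apply minimal_agrees_off_sparse. }
  pose proof (proj1 Hr ((s + r) / 2) ltac:(lra) HMin). lra.
Qed.
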